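(* Let $Y$ be a random simplicial complex on $[n]=\{0,\dots,n\}$ drawn from the lower model in the medial regime, with constants $0<p\le P<1$ such that $p\le p_\sigma\le P$ for all $\sigma$. Let $\mathcal U$ be the cover of $Y$ by the closed stars of its vertices. Then for any constant $0<\alpha<1$, asymptotically almost surely the nerve complex $\mathcal N(\mathcal U)$ contains the full $\lfloor\alpha\log_{(p^{-1})}n\rfloor$-dimensional skeleton of the simplex spanned by the vertex set of $Y$; in particular $\mathcal N(\mathcal U)$ is $\big(\lfloor\alpha\log_{(p^{-1})}n\rfloor-1\big)$-connected, asymptotically almost surely.
   Context: Lower model: each non-empty proper subset $\sigma\subsetneq[n]$ is included independently with probability $p_\sigma$ into a random hypergraph $X$, and $Y$ is the largest simplicial complex contained in $X$. Medial regime: $p,P\in(0,1)$ are independent of $n$. The closed star $\mathrm{St}(v)$ of a vertex $v$ is the union of all closed simplexes of $Y$ containing $v$. The nerve $\mathcal N(\mathcal U)$ has the vertices of $Y$ as vertices, and a set $S$ of vertices spans a simplex iff $\bigcap_{v\in S}\mathrm{St}(v)\neq\emptyset$. Asymptotically almost surely means with probability tending to $1$ as $n\to\infty$. *)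

From mathcomp Require Import all_boot all_order all_algebra.
From mathcomp Require Import reals exp.
Set Implicit Arguments. Unset Strict Implicit. Unset Printing Implicit Defensive.
Import Order.TTheory GRing.Theory Num.Theory.
Local Open Scope ring_scope.

Section LowerModel.
Variable n : nat.
Notation V := 'I_n.+1.

Definition proper_face (s : {set V}) : bool := (s != set0) && (s != setT).

(* Y = largest simplicial complex contained in the hypergraph X:
   the non-empty sets all of whose non-empty subsets lie in X *)
Definition lower_complex (X : {set {set V}}) : {set {set V}} :=
  [set s | (s != set0) &&
     [forall t : {set V}, ((t != set0) && (t \subset s)) ==> (t \in X)]].

Definition vertices (Y : {set {set V}}) : {set V} := [set v | [set v] \in Y].

Definition closed_star (Y : {set {set V}}) (v : V) : {set {set V}} :=
  [set t | (t != set0) &&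
     [exists s : {set V}, [&& s \in Y, v \in s & t \subset s]]].

(* S spans a simplex of the nerve of the cover by closed stars iff the closed
   stars of the vertices in S have non-empty common intersection, i.e. share a
   (non-empty) face *)
Definition nerve_simplex (Y : {set {set V}}) (S : {set V}) : bool :=
  [&& S != set0, S \subset vertices Y &
     [exists t : {set V}, [forall v in S, t \in closed_star Y v]]].

Definition nerve_contains_skeleton (Y : {set {set V}}) (k : int) : bool :=
  [forall S : {set V},
     [&& S != set0, S \subset vertices Y & (#|S|%:Z <= k + 1)%R]
       ==> nerve_simplex Y S].

Variable R : realType.

(* probability weight of a hypergraph X (supported on proper faces) in the
   lower model with independent inclusion probabilities ps *)
Definition hyp_weight (ps : {set V} -> R) (X : {set {set V}}) : R :=
  \prod_(s : {set V} | proper_face s) (if s \in X then ps s else 1 - ps s).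

Definition is_hypergraph (X : {set {set V}}) : bool :=
  [forall s in X, proper_face s].

Definition lower_prob (ps : {set V} -> R) (E : {set {set V}} -> bool) : R :=
  \sum_(X : {set {set V}} | is_hypergraph X && E (lower_complex X))
     hyp_weight ps X.

End LowerModel.

Definition skel_dim (R : realType) (alpha p : R) (n : nat) : int :=
  Num.floor (alpha * (ln (n%:R : R) / ln p^-1)).

From mathcomp Require Import all_boot all_order all_algebra.
From mathcomp Require Import reals exp.
From mathcomp Require Import sequences zify ring lra.
Import Order.TTheory GRing.Theory Num.Theory.
Local Open Scope ring_scope.
Set Implicit Arguments. Unset Strict Implicit. Unset Printing Implicit Defensive.

(* Let m = k + 1.  A set S of at most m vertices of Y spans a simplex of the
   nerve as soon as some vertex w outside S has {w} and all edges {v, w}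
   (v in S) in X: the closed stars of the vertices of S then share the face
   {w}.  These "star blocks" of at most m + 1 faces are disjoint for distinct
   w, so S fails with probability at most (1 - p^(m+1))^(n+1-m).  A union
   bound over the (n+1)^m maps from 'I_m onto such sets S bounds the failure
   probability by (n+1)^m (1 - p^(m+1))^(n+1-m) <= exp (m (ln n + 1) -
   p^(m+1) (n+1-m)).  For m <= alpha log_(1/p) n + 1 we have
   p^(m+1) >= p^2 n^(-alpha), so the exponent is O((ln n)^2) - Omega(n^(1-alpha)),
   which tends to -oo. *)

Section BernoulliProduct.
Variables (R : realType) (I : finType) (q : I -> R).

Definition bernoulli_weight (X : {set I}) : R :=
  \prod_i (if i \in X then q i else 1 - q i).

Definition expect (G : {set I} -> R) : R := \sum_X bernoulli_weight X * G X.

Lemma expect1 : expect (fun _ => 1) = 1.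
Proof.
rewrite /expect (eq_bigr bernoulli_weight) => [|X _]; last by rewrite mulr1.
have -> : 1 = \prod_i \sum_(b : bool) (if b then q i else 1 - q i) :> R.
  by rewrite big1 // => i _; rewrite big_bool /= addrC subrK.
rewrite bigA_distr_bigA (reindex (fun g : {ffun I -> bool} => [set i | g i])) /=.
  by apply: eq_bigr => g _; apply: eq_bigr => i _; rewrite inE.
exists (fun X : {set I} => [ffun i => i \in X]) => [g _ | X _].
  by apply/ffunP => i; rewrite ffunE inE.
by apply/setP => i; rewrite inE ffunE.
Qed.

Lemma expectB F G :
  expect (fun X => F X - G X) = expect F - expect G.
Proof. by rewrite /expect -sumrB; apply: eq_bigr => X _; rewrite mulrBr. Qed.

Lemma expect_indicatorC (b : pred {set I}) :
  expect (fun X => (b X)%:R) = 1 - expect (fun X => (~~ b X)%:R).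
Proof.
rewrite -[X in X - _]expect1 -expectB.
by apply: eq_bigr => X _; case: (b X); rewrite /= ?subr0 ?subrr.
Qed.

Lemma expect_sum (J : finType) (F : J -> {set I} -> R) :
  expect (fun X => \sum_j F j X) = \sum_j expect (F j).
Proof. by rewrite /expect; under eq_bigr do rewrite mulr_sumr; exact: exchange_big. Qed.

Lemma ler_expect F G : (forall i, 0 <= q i <= 1) ->
  (forall X, F X <= G X) -> expect F <= expect G.
Proof.
move=> q01 FG; apply: ler_sum => X _; apply: ler_wpM2l (FG X).
apply: prodr_ge0 => i _; have /andP[q0 q1] := q01 i.
by case: (i \in X); rewrite ?subr_ge0.
Qed.

(* Pair each [X] not containing [c] with [c |: X]: both carry the same weight
   apart from the factor [q c] or [1 - q c]. *)
Lemma expect_mem_mul c G : (forall X, G (X :\ c) = G X) ->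
  expect (fun X => (c \in X)%:R * G X) = q c * expect G.
Proof.
move=> GD.
pose H (X : {set I}) := \prod_(i | i != c) (if i \in X then q i else 1 - q i) * G X.
have weightE (X : {set I}) : bernoulli_weight X * G X
    = (if c \in X then q c else 1 - q c) * H X.
  by rewrite /bernoulli_weight (bigD1 c) //= mulrA.
have HD (X : {set I}) : H (X :\ c) = H X.
  by rewrite /H GD; congr (_ * _); apply: eq_bigr => i ic; rewrite !inE ic.
pose toggle (X : {set I}) := if c \in X then X :\ c else c |: X.
have toggleK : involutive toggle.
  move=> X; rewrite /toggle; case cX: (c \in X); first by rewrite !inE eqxx setD1K.
  by rewrite setU11 setU1K ?cX.
have sum_in_out :
    \sum_(X : {set I} | c \in X) H X = \sum_(X : {set I} | c \notin X) H X.
  rewrite (reindex_inj (inv_inj toggleK)); apply: eq_big => X.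
    by rewrite /toggle; case: ifP; rewrite !inE ?eqxx // => ->.
  by rewrite /toggle; case: ifP => // cX _; rewrite -HD setU1K ?cX.
have expectE : expect G = \sum_(X : {set I} | c \notin X) H X.
  rewrite /expect (bigID (fun X : {set I} => c \in X)) /=.
  rewrite (eq_bigr (fun X => q c * H X)) => [|X cX]; last by rewrite weightE cX.
  rewrite [X in _ + X](eq_bigr (fun X => (1 - q c) * H X)) => [|X cX]; last first.
    by rewrite weightE (negbTE cX).
  by rewrite -!mulr_sumr sum_in_out -mulrDl addrC subrK mul1r.
rewrite expectE /expect (bigID (fun X : {set I} => c \in X)) /=.
rewrite [X in _ + X]big1 => [|X cX].
  rewrite addr0 -sum_in_out mulr_sumr; apply: eq_bigr => X cX.
  by rewrite mulrCA weightE cX mul1r.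
by rewrite (negbTE cX) mul0r mulr0.
Qed.

Lemma expect_prod_mem_mul (A : {set I}) G : (forall X, G (X :\: A) = G X) ->
  expect (fun X => (\prod_(c in A) (c \in X)%:R) * G X)
    = (\prod_(c in A) q c) * expect G.
Proof.
move=> GA; transitivity (expect (fun X => (\prod_(c <- enum A) (c \in X)%:R) * G X)).
  by apply: eq_bigr => X _; rewrite big_enum.
rewrite -big_enum; have : {subset enum A <= A} by move=> c; rewrite mem_enum.
elim: (enum A) (enum_uniq A) => [|c l IH] /=.
  by move=> _ _; rewrite big_nil mul1r; apply: eq_bigr => X _; rewrite big_nil mul1r.
move=> /andP[cl ul] lA.
rewrite big_cons -mulrA -IH //; last by move=> x xl; apply: lA; rewrite inE xl orbT.
rewrite -expect_mem_mul => [|X].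
  by apply: eq_bigr => X _; rewrite big_cons !mulrA.
congr (_ * _); last first.
  by rewrite -[LHS]GA -[RHS]GA setDDl (setUidPr _) // sub1set lA ?mem_head.
apply: eq_big_seq => j jl; rewrite !inE.
by have -> : j != c by apply: contraNneq cl => <-.
Qed.

Lemma expect_prod_missing_blocks (J : eqType) (r : seq J) (B : J -> {set I}) :
  uniq r -> {in r &, forall w w', w != w' -> [disjoint B w & B w']} ->
  expect (fun X => \prod_(w <- r) (1 - \prod_(c in B w) (c \in X)%:R))
    = \prod_(w <- r) (1 - \prod_(c in B w) q c).
Proof.
elim: r => [|w r IH] /=.
  by move=> _ _; rewrite big_nil -[RHS]expect1; apply: eq_bigr => X _; rewrite big_nil.
move=> /andP[wr ur] Bdisj.
have disj_w j : j \in r -> [disjoint B w & B j].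
  move=> jr; apply: Bdisj; rewrite ?inE ?eqxx ?jr ?orbT //.
  by apply: contraNneq wr => ->.
have Bdisj_r : {in r &, forall x y, x != y -> [disjoint B x & B y]}.
  by move=> x y xr yr; apply: Bdisj; rewrite inE ?xr ?yr orbT.
rewrite big_cons mulrBl mul1r -(IH ur Bdisj_r).
rewrite -expect_prod_mem_mul -?expectB => [|X].
  by apply: eq_bigr => X _; rewrite big_cons mulrBl mul1r.
apply: eq_big_seq => j jr; congr (1 - _); apply: eq_bigr => c cj.
by rewrite !inE (disjointFl (disj_w j jr) cj).
Qed.

End BernoulliProduct.

Lemma subset_pair (T : finType) (v w : T) (t : {set T}) : t \subset [set v; w] ->
  [\/ t = set0, t = [set v], t = [set w] | t = [set v; w]].
Proof.
move=> /setIidPl <-; rewrite setIUr.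
have tI1 x : t :&: [set x] = if x \in t then [set x] else set0.
  apply/setP => y; case xt: (x \in t); rewrite !inE;
    by case: eqP => [->|]; rewrite ?xt ?andbF.
rewrite !tI1; case: (v \in t); case: (w \in t); rewrite ?setU0 ?set0U;
  by [exact: Or41 | exact: Or42 | exact: Or43 | exact: Or44].
Qed.

Lemma set1_neq0 (T : finType) (x : T) : [set x] != set0.
Proof. by rewrite -card_gt0 cards1. Qed.

Lemma exists_ffun_onto (T : finType) m (S : {set T}) : S != set0 -> (#|S| <= m)%N ->
  exists f : {ffun 'I_m -> T}, f @: [set: 'I_m] = S.
Proof.
move=> /set0Pn [x0 xS] Sm; exists [ffun i : 'I_m => nth x0 (enum S) i].
apply/setP => y; apply/imsetP/idP => [[i _ ->] | yS].
  rewrite ffunE; case: (ltnP i (size (enum S))) => iS; last by rewrite nth_default.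
  by rewrite -mem_enum mem_nth.
have yS' : (index y (enum S) < m)%N.
  by apply: leq_trans Sm; rewrite cardE index_mem mem_enum.
by exists (Ordinal yS'); rewrite ?inE // ffunE nth_index ?mem_enum.
Qed.

Section LowerModelBounds.
Variables (R : realType) (n : nat) (ps : {set 'I_n.+1} -> R).
Notation V := 'I_n.+1.
Implicit Types (S c s : {set V}) (X : {set {set V}}) (w : V).

(* Non-proper faces never occur in [X]: they get probability 0. *)
Definition face_prob s : R := if proper_face s then ps s else 0.

Lemma bernoulli_weight_face_prob X : bernoulli_weight face_prob X
  = if is_hypergraph X then hyp_weight ps X else 0.
Proof.
rewrite /bernoulli_weight (bigID (@proper_face n)) /=.
rewrite (eq_bigr (fun s => if s \in X then ps s else 1 - ps s)) => [|s sp]; last first.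
  by rewrite /face_prob sp.
rewrite -/(hyp_weight ps X); case: (boolP (is_hypergraph X)) => [/forallP hX |].
  rewrite big1 ?mulr1 // => s sp.
  have sX : s \notin X by apply: contra sp => /(implyP (hX s)).
  by rewrite /face_prob (negbTE sp) (negbTE sX) subr0.
rewrite negb_forall => /existsP [s]; rewrite negb_imply => /andP[sX sp].
by rewrite (bigD1 s) //= /face_prob sX (negbTE sp) mul0r mulr0.
Qed.

Lemma lower_prob_expect E :
  lower_prob ps E = expect face_prob (fun X => (E (lower_complex X))%:R).
Proof.
rewrite /lower_prob /expect big_mkcond; apply: eq_bigr => X _.
rewrite bernoulli_weight_face_prob.
by case: is_hypergraph; case: E; rewrite ?mulr1 ?mulr0 ?mul0r.
Qed.

Definition star_block S w : {set {set V}} :=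
  [set w] |: [set [set v; w] | v in S].

Definition missing_star_blocks S X : R :=
  \prod_(w in ~: S) (1 - \prod_(c in star_block S w) (c \in X)%:R).

Lemma mem_star_block S w c :
  c \in star_block S w -> (w \in c) && (c \subset w |: S).
Proof.
rewrite !inE => /orP[/eqP -> | /imsetP [v vS ->]].
  by rewrite set11 sub1set setU11.
by rewrite !inE eqxx orbT /= subUset !sub1set !inE eqxx vS orbT.
Qed.

Lemma star_blocks_disjoint S w w' : w \notin S -> w != w' ->
  [disjoint star_block S w & star_block S w'].
Proof.
move=> wS ww'; apply/pred0P => c /=; apply/andP.
move=> [/mem_star_block/andP[wc _] /mem_star_block/andP[_ /subsetP/(_ w wc)]].
by rewrite !inE (negbTE wS) orbF (negbTE ww').
Qed.

Lemma proper_face_star_block S w c :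
  (2 <= n)%N -> c \in star_block S w -> proper_face c.
Proof.
move=> n2 cb; rewrite /proper_face; apply/andP; split.
  by apply/set0Pn; exists w; case/andP: (mem_star_block cb).
apply: contraTneq n2 => cT; rewrite -ltnNge.
have := cardsT V; rewrite card_ord -cT => <-.
move: cb; rewrite !inE => /orP[/eqP -> | /imsetP [v _ ->]]; first by rewrite cards1.
by rewrite cards2; case: (v != w).
Qed.

Lemma missing_star_blocks_ge0 S X : 0 <= missing_star_blocks S X.
Proof.
apply: prodr_ge0 => w _; rewrite subr_ge0; apply: prodr_ile1 => c _.
by case: (c \in X); rewrite ?ler01 ?lexx.
Qed.

Lemma expect_missing_star_blocks S : expect face_prob (missing_star_blocks S)
  = \prod_(w in ~: S) (1 - \prod_(c in star_block S w) face_prob c).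
Proof.
rewrite -big_enum -expect_prod_missing_blocks ?enum_uniq //.
  by apply: eq_bigr => X _; rewrite /missing_star_blocks big_enum.
by move=> w w'; rewrite !mem_enum inE => wS _; apply: star_blocks_disjoint.
Qed.

Lemma nerve_simplex_of_star_block X S w :
  S != set0 -> S \subset vertices (lower_complex X) -> star_block S w \subset X ->
  nerve_simplex (lower_complex X) S.
Proof.
move=> S0 SY /subsetP blockX; rewrite /nerve_simplex S0 SY.
apply/existsP; exists [set w]; apply/forall_inP => v vS.
have vwY : [set v; w] \in lower_complex X.
  rewrite inE -card_gt0 cards2 /=.
  apply/forall_inP => t /andP[t0 /subset_pair[] tE]; subst t.
  - by rewrite eqxx in t0.
  - move/subsetP: SY => /(_ v vS); rewrite !inE => /andP[_ /forall_inP]; apply.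
    by rewrite set1_neq0 subxx.
  - by apply: blockX; rewrite !inE eqxx.
  by apply: blockX; rewrite !inE; apply/orP; right; apply/imsetP; exists v.
rewrite inE set1_neq0; apply/existsP; exists [set v; w].
by rewrite vwY sub1set !inE !eqxx orbT.
Qed.

Lemma missing_star_blocks_of_not_nerve_simplex X S : S != set0 ->
  S \subset vertices (lower_complex X) -> ~~ nerve_simplex (lower_complex X) S ->
  missing_star_blocks S X = 1.
Proof.
move=> S0 SY notS; apply: big1 => w _.
have [c cb cX] : exists2 c, c \in star_block S w & c \notin X.
  apply/exists_inP; apply: contraR notS; rewrite negb_exists_in => /forall_inP blockX.
  by apply: (nerve_simplex_of_star_block S0 SY); apply/subsetP => c /blockX /negbNE.
by rewrite (bigD1 c) //= (negbTE cX) mul0r subr0.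
Qed.

Lemma not_skeleton_missing_star_blocks X (k : int) (m : nat) :
  k + 1 = m%:Z -> ~~ nerve_contains_skeleton (lower_complex X) k ->
  exists f : {ffun 'I_m -> V}, missing_star_blocks (f @: [set: 'I_m]) X = 1.
Proof.
move=> km /forallPn [S]; rewrite negb_imply km lez_nat => /andP[/and3P[S0 SY Sm] notS].
have [f fS] := exists_ffun_onto S0 Sm.
by exists f; rewrite fS; apply: missing_star_blocks_of_not_nerve_simplex.
Qed.

Variable p : R.
Hypotheses (p_ge0 : 0 <= p) (p_le1 : p <= 1)
  (ps_bounds : forall s, proper_face s -> p <= ps s <= 1).

Lemma face_prob_bounds s : 0 <= face_prob s <= 1.
Proof.
rewrite /face_prob; case: ifP => [/ps_bounds/andP[ps_ge ->] | _].
  by rewrite (le_trans p_ge0 ps_ge).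
by rewrite lexx ler01.
Qed.

Lemma expect_missing_star_blocks_le S (m : nat) : (2 <= n)%N -> (#|S| <= m)%N ->
  expect face_prob (missing_star_blocks S) <= (1 - p ^+ m.+1) ^+ (n.+1 - m).
Proof.
move=> n2 Sm; rewrite expect_missing_star_blocks.
have pm_bounds : 0 <= 1 - p ^+ m.+1 <= 1.
  by rewrite subr_ge0 exprn_ile1 //= lerBlDr lerDl exprn_ge0.
apply: (@le_trans _ _ (\prod_(w in ~: S) (1 - p ^+ m.+1))).
  apply: ler_prod => w _; rewrite subr_ge0 lerD2l lerN2.
  rewrite prodr_ile1 => [|c _]; last exact: face_prob_bounds.
  apply: (@le_trans _ _ (\prod_(c in star_block S w) p)).
    rewrite prodr_const; apply: ler_wiXn2l => //.
    rewrite cardsU1 -[m.+1]add1n leq_add ?leq_b1 //.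
    exact: leq_trans (leq_imset_card _ _) Sm.
  apply: ler_prod => c cb; rewrite p_ge0 /face_prob (proper_face_star_block n2 cb).
  by case/andP: (ps_bounds (proper_face_star_block n2 cb)).
rewrite prodr_const; case/andP: pm_bounds => pm0 pm1; apply: ler_wiXn2l => //.
by have := cardsC S; rewrite card_ord; lia.
Qed.

(* Union bound over the at most [(n+1)^m] sets of size at most [m], each
   enumerated by a map ['I_m -> V]. *)
Lemma expect_not_skeleton_le (k : int) (m : nat) : (2 <= n)%N -> k + 1 = m%:Z ->
  expect face_prob (fun X => (~~ nerve_contains_skeleton (lower_complex X) k)%:R)
  <= (n.+1)%:R ^+ m * (1 - p ^+ m.+1) ^+ (n.+1 - m).
Proof.
move=> n2 km; pose F (f : {ffun 'I_m -> V}) := missing_star_blocks (f @: [set: 'I_m]).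
have F_ge0 (P : pred {ffun 'I_m -> V}) X : 0 <= \sum_(f | P f) F f X.
  by apply: sumr_ge0 => f _; apply: missing_star_blocks_ge0.
apply: (@le_trans _ _ (expect face_prob (fun X => \sum_f F f X))).
  apply: ler_expect => [|X]; first exact: face_prob_bounds.
  case: (boolP (nerve_contains_skeleton _ _)) => [_|]; first exact: F_ge0.
  case/(not_skeleton_missing_star_blocks km) => f fX.
  by rewrite (bigD1 f) //= {1}/F fX lerDl.
rewrite (expect_sum face_prob F).
apply: (@le_trans _ _ (\sum_(f : {ffun 'I_m -> V}) (1 - p ^+ m.+1) ^+ (n.+1 - m))).
  apply: ler_sum => f _; apply: expect_missing_star_blocks_le => //.
  by rewrite (leq_trans (leq_imset_card _ _)) // cardsT card_ord.
by rewrite sumr_const card_ffun !card_ord -natrX mulr_natl.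
Qed.

Lemma lower_prob_skeleton_ge (k : int) (m : nat) : (2 <= n)%N -> k + 1 = m%:Z ->
  1 - (n.+1)%:R ^+ m * (1 - p ^+ m.+1) ^+ (n.+1 - m)
    <= lower_prob ps (fun Y => nerve_contains_skeleton Y k).
Proof.
move=> n2 km; rewrite lower_prob_expect expect_indicatorC lerD2l lerN2.
exact: expect_not_skeleton_le.
Qed.

End LowerModelBounds.

Lemma quadratic_lt_expR (R : realType) (a b c beta : R) : 0 <= a -> 0 < c -> 0 < beta ->
  exists x0, forall x, x0 <= x -> a * x ^+ 2 + b < c * expR (beta * x).
Proof.
move=> a0 c0 beta0; pose K := a + `|b| + 1.
have cb0 : 0 < c * beta ^+ 3 by rewrite mulr_gt0 ?exprn_gt0.
exists (1 + 6 * K / (c * beta ^+ 3)) => x x0x.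
have x1 : 1 <= x.
  by apply: le_trans x0x; rewrite lerDl divr_ge0 ?mulr_ge0 ?addr_ge0 // ltW.
have x0 : 0 <= x := le_trans ler01 x1.
have Kx : 6 * K <= c * beta ^+ 3 * x.
  by rewrite -ler_pdivrMl // mulrC; apply: le_trans x0x; rewrite lerDr.
have cube : (beta * x) ^+ 3 / 6 <= expR (beta * x).
  apply: le_trans (expR_ge1Dxn 2 (mulr_ge0 (ltW beta0) x0)).
  by rewrite (_ : 3`!%:R = 6) // lerDr ler01.
have b_le : b <= `|b| * x ^+ 2.
  by apply: le_trans (ler_norm b) (ler_peMr _ _); rewrite ?expr_ge1.
have Kx2 : K * x ^+ 2 * 6 <= c * beta ^+ 3 * x * x ^+ 2.
  by rewrite mulrAC ler_wpM2r ?exprn_ge0 // mulrC.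
have x2 : 0 < x ^+ 2 by rewrite exprn_gt0 // (lt_le_trans ltr01).
apply: (@lt_le_trans _ _ (c * ((beta * x) ^+ 3 / 6))); last by rewrite ler_pM2l.
rewrite /K in Kx2; nra.
Qed.

Lemma natr_succ_expn_le_expR (R : realType) (n m : nat) : (0 < n)%N ->
  (n.+1)%:R ^+ m <= expR (m%:R * (ln n%:R + 1)) :> R.
Proof.
move=> n0; rewrite expRM_natl lerXn2r ?nnegrE ?expR_ge0 // expRD lnK ?posrE ?ltr0n //.
have e2 : 2 <= expR (1 : R) by apply: le_trans (expR_ge1Dx 1) _.
rewrite -addn1 natrD; have : 1 <= n%:R :> R by rewrite ler1n.
nra.
Qed.

Lemma onemX_le_expR (R : realType) (y : R) (N : nat) : y <= 1 ->
  (1 - y) ^+ N <= expR (- (y * N%:R)).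
Proof.
move=> y1; rewrite -mulNr mulrC expRM_natl lerXn2r ?nnegrE ?expR_ge0 ?subr_ge0 //.
exact: expR_ge1Dx.
Qed.

Lemma expR_mul_ln_le_expr (R : realType) (p z : R) (j : nat) : 0 < p <= 1 ->
  j%:R <= z -> expR (z * ln p) <= p ^+ j.
Proof.
move=> /andP[p0 p1] jz; rewrite -[p in p ^+ j]lnK ?posrE // -expRM_natl ler_expR.
by rewrite ler_wnM2r ?ln_le0.
Qed.

Lemma skel_dim_succ_bound (R : realType) (alpha p : R) (n : nat) :
  0 <= alpha -> 0 < p -> p <= 1 -> (0 < n)%N ->
  exists m : nat, skel_dim alpha p n + 1 = m%:Z /\
    m%:R <= alpha * (ln n%:R / ln p^-1) + 1.
Proof.
move=> alpha0 p0 p1 n0.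
have k0 : 0 <= skel_dim alpha p n.
  by rewrite floor_ge0 mulr_ge0 // divr_ge0 // ln_ge0 // ?ler1n // invf_ge1.
pose m := absz (skel_dim alpha p n + 1).
have km : skel_dim alpha p n + 1 = m%:Z by rewrite /m gez0_abs // addr_ge0.
exists m; split => //.
have -> : m%:R = (skel_dim alpha p n + 1)%:~R :> R by rewrite km.
by rewrite intrD lerD2r floor_le.
Qed.

Lemma expr_succ_mul_ge (R : realType) (p a : R) (n m : nat) :
  0 < p < 1 -> (0 < n)%N ->
  m%:R <= a * ln n%:R + 1 -> a * ln n%:R <= n%:R / 2 ->
  p ^+ 2 / 2 * expR ((1 + a * ln p) * ln n%:R) <= p ^+ m.+1 * (n.+1 - m)%:R.
Proof.
move=> /andP[p0 p1] n0; set x := ln (n%:R : R) => m_le ax_le.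
have nE : n%:R = expR x by rewrite lnK ?posrE ?ltr0n.
have m_n : (m <= n.+1)%N.
  by rewrite -(ler_nat R) [n.+1%:R]mulrSr; have := ler0n R n; lra.
have N_ge : n%:R / 2 <= (n.+1 - m)%:R :> R.
  by rewrite natrB // [n.+1%:R]mulrSr; lra.
have y_ge : expR ((a * x + 2) * ln p) <= p ^+ m.+1.
  by apply: expR_mul_ln_le_expr; rewrite ?p0 ?(ltW p1) // [m.+1%:R]mulrSr; lra.
have -> : p ^+ 2 / 2 * expR ((1 + a * ln p) * x)
    = expR ((a * x + 2) * ln p) * (n%:R / 2).
  rewrite nE -[p in p ^+ 2]lnK ?posrE // -expRM_natl mulrA [LHS]mulrAC -!expRD.
  by congr (expR _ / 2); ring.
by rewrite ler_pM ?expR_ge0 ?divr_ge0 ?ler0n.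
Qed.

Lemma union_bound_vanishes (R : realType) (p alpha eps : R) :
  0 < p < 1 -> 0 < alpha < 1 -> 0 < eps ->
  exists N : nat, forall n m : nat, (N <= n)%N ->
    m%:R <= alpha * (ln n%:R / ln p^-1) + 1 ->
    (n.+1)%:R ^+ m * (1 - p ^+ m.+1) ^+ (n.+1 - m) < eps.
Proof.
move=> p01 /andP[alpha0 alpha1] eps0; have /andP[p0 p1] := p01.
have lnp0 : ln p < 0 by rewrite ln_lt0 ?p0.
pose a := alpha / ln p^-1.
have lnVp : ln p^-1 = - ln p by rewrite lnV ?posrE.
have a0 : 0 <= a by apply: divr_ge0; rewrite ?lnVp ?oppr_ge0 ltW.
have a_lnp : a * ln p = - alpha by rewrite /a lnVp invrN mulrN mulNr mulfVK ?ltr0_neq0.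
have [x1 big1] : exists x1, forall x, x1 <= x ->
    2 * (a + 1) * x ^+ 2 - ln eps < p ^+ 2 / 2 * expR ((1 - alpha) * x).
  apply: quadratic_lt_expR; rewrite ?divr_gt0 ?exprn_gt0 ?subr_gt0 //.
  by rewrite mulr_ge0 ?addr_ge0.
have [x2 big2] : exists x2, forall x, x2 <= x -> 2 * a * x ^+ 2 + 0 < 1 * expR (1 * x).
  by apply: quadratic_lt_expR; rewrite ?ltr01 // mulr_ge0.
exists (Num.Def.archi_bound (expR (Num.max 1 (Num.max x1 x2)))) => n m nN m_le.
have n_gt : expR (Num.max 1 (Num.max x1 x2)) < n%:R.
  by apply: lt_le_trans (archi_boundP (expR_ge0 _)) _; rewrite ler_nat.
have n0 : (0 < n)%N by rewrite -(ltr0n R) (lt_trans (expR_gt0 _) n_gt).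
set x := ln (n%:R : R); have nE : n%:R = expR x by rewrite lnK ?posrE ?ltr0n.
have /and3P[x_ge1 x1x x2x] : [&& 1 <= x, x1 <= x & x2 <= x].
  by rewrite -!ge_max -ler_expR -nE ltW.
have {}m_le : m%:R <= a * x + 1 by rewrite /a mulrAC -mulrA.
have ax_le : a * x <= n%:R / 2.
  have := big2 x x2x; rewrite nE !mul1r addr0.
  have : x <= x ^+ 2 by rewrite expr2 ler_peMr // (le_trans ler01).
  nra.
have yN := expr_succ_mul_ge p01 n0 m_le ax_le; rewrite -/x a_lnp in yN.
have mx : m%:R * (x + 1) <= 2 * (a + 1) * x ^+ 2 by have := ler0n R m; nra.
have expo := big1 x x1x.
have y1 : p ^+ m.+1 <= 1 by rewrite exprn_ile1 ?(ltW p0) ?(ltW p1).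
apply: le_lt_trans (ler_pM _ _ (natr_succ_expn_le_expR R m n0) (onemX_le_expR _ y1)) _.
- exact: exprn_ge0 (ler0n _ _).
- by rewrite exprn_ge0 // subr_ge0.
by rewrite -expRD -/x -[eps]lnK ?posrE // ltr_expR; lra.
Qed.

Theorem corollary6p4 (R : realType) (p P : R)
  (ps : forall n : nat, {set 'I_n.+1} -> R) (alpha : R) :
  0 < p -> p <= P -> P < 1 ->
  (forall (n : nat) (s : {set 'I_n.+1}), proper_face s -> p <= ps n s <= P) ->
  0 < alpha < 1 ->
  forall eps : R, 0 < eps ->
  exists N : nat, forall n : nat, (N <= n)%N ->
    1 - eps < lower_prob (ps n)
                (fun Y => nerve_contains_skeleton Y (skel_dim alpha p n)).
Proof.
move=> p0 pP P1 ps_bounds alpha01 eps eps0.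
have p1 : p < 1 := le_lt_trans pP P1.
have alpha0 : 0 <= alpha by case/andP: alpha01 => /ltW.
have p01 : 0 < p < 1 by rewrite p0 p1.
have [N small] := union_bound_vanishes p01 alpha01 eps0.
exists (maxn 2 N) => n; rewrite geq_max => /andP[n2 nN].
have [m [km m_le]] := skel_dim_succ_bound alpha0 p0 (ltW p1) (ltnW n2).
have ps_le1 (s : {set 'I_n.+1}) : proper_face s -> p <= ps n s <= 1.
  by move=> /ps_bounds/andP[-> psP]; rewrite (le_trans psP) ?ltW.
apply: lt_le_trans (lower_prob_skeleton_ge (ltW p0) (ltW p1) ps_le1 n2 km).
by rewrite ltrD2l ltrN2 small.
Qed.
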